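(* Let $\alpha,\beta,\bar\beta,\Delta,\bar\Delta\in\mathbb{C}$ with $(\Delta,\beta)\neq(0,0)$, $(\bar\Delta,\bar\beta)\neq(0,0)$ and $\bar\beta-\beta=1$. Consider extensions of conformal $\widetilde{\mathrm{SV}}$-modules $$0\to V(\alpha,\bar\beta,\bar\Delta)\to E\to V(\alpha,\beta,\Delta)\to0,$$ realized as $E=\mathbb{C}[\partial]v_{\bar\Delta}\oplus\mathbb{C}[\partial]v_\Delta$ with $\mathbb{C}[\partial]v_{\bar\Delta}\cong V(\alpha,\bar\beta,\bar\Delta)$ a submodule and $$L_\lambda v_\Delta=(\partial+\alpha+\Delta\lambda)v_\Delta+f(\partial,\lambda)v_{\bar\Delta},\ M_\lambda v_\Delta=g(\partial,\lambda)v_{\bar\Delta},\ N_\lambda v_\Delta=\beta v_\Delta+k(\partial,\lambda)v_{\bar\Delta},\ Y_\lambda v_\Delta=h(\partial,\lambda)v_{\bar\Delta},$$ with $f,g,h,k\in\mathbb{C}[\partial,\lambda]$. Nontrivial extensions of this form exist if and only if $\Delta-\bar\Delta=-\tfrac12$ or $(\Delta,\bar\Delta)=(\tfrac{\bar\beta+1}2,\tfrac{\bar\beta}2)$. In these cases they are given, up to equivalence, as follows (with $\bar\partial=\partial+\alpha$): (i) $\Delta-\bar\Delta=-\tfrac12$: $f=g=k=0$ and $h=a_0$ with $a_0\neq0$; (ii) $(\Delta,\bar\Delta)=(\tfrac{\bar\beta+1}2,\tfrac{\bar\beta}2)$: $f=g=k=0$ and $h=a_1(\bar\partial+\bar\beta\lambda)$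 with $a_1\neq0$. Furthermore, $\mathrm{Ext}(V(\alpha,\beta,\Delta),V(\alpha,\beta+1,\bar\Delta))$ is $1$-dimensional in cases (i) and (ii).
   Context: A conformal module over a Lie conformal algebra $R$ is a $\mathbb{C}[\partial]$-module $V$ with $a\mapsto a_\lambda\in\mathrm{End}_{\mathbb{C}}(V)\otimes\mathbb{C}[\lambda]$ satisfying $[a_\lambda,b_\mu]=[a_\lambda b]_{\lambda+\mu}$ and $(\partial a)_\lambda=[\partial,a_\lambda]=-\lambda a_\lambda$. $\widetilde{\mathrm{SV}}$ is the Lie conformal algebra that is the free $\mathbb{C}[\partial]$-module with basis $L,M,Y,N$ whose nonzero $\lambda$-brackets (up to skew-symmetry) are $[L_\lambda L]=(\partial+2\lambda)L$, $[L_\lambda Y]=(\partial+\tfrac32\lambda)Y$, $[L_\lambda M]=(\partial+\lambda)M$, $[Y_\lambda Y]=(\partial+2\lambda)M$, $[L_\lambda N]=(\partial+\lambda)N$, $[N_\lambda M]=2M$, $[N_\lambda Y]=Y$. $V(\alpha,\beta,\Delta)=\mathbb{C}[\partial]v_\Delta$ with $L_\lambda v_\Delta=(\partial+\alpha+\Delta\lambda)v_\Delta$, $N_\lambda v_\Delta=\beta v_\Delta$, $M_\lambda v_\Delta=Y_\lambda v_\Delta=0$. An extension of $W$ by $V$ is an exact sequence $0\to V\to E\to W\to0$ of conformal modules; equivalence via a module map of middle terms compatible with identities; trivial means equivalent to the direct sum. $\mathrm{Ext}(W,V)$ is the space of extension cocycles modulo coboundaries. *)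

From HB Require Import structures.
From mathcomp Require Import all_boot all_algebra.
From mathcomp Require Import reals complex.
Set Implicit Arguments. Unset Strict Implicit. Unset Printing Implicit Defensive.
Import GRing.Theory.
Local Open Scope ring_scope.

Section SV.
Variable R : realType.
Local Notation C := (R[i]).

(* Basis {L, M, Y, N} of the free C[d]-module SV~. *)
Inductive gen := gL | gM | gY | gN.

(* Structure polynomials of the lambda-bracket:
   [a_lambda b] = sum_x (lbr a b x d lambda) x, where lbr a b x is the
   polynomial P_{abx}(d, lambda) written as a (polynomial) function.
   The entries for reversed pairs are obtained from the given ones by
   skew-symmetry [b_lambda a] = - [a_{-lambda-d} b]. *)
Definition lbr (a b x : gen) (d l : C) : C :=
  match a, b, x with
  | gL, gL, gL => d + 2 * l
  | gL, gY, gY => d + 3 / 2 * l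
  | gY, gL, gY => 1 / 2 * d + 3 / 2 * l
  | gL, gM, gM => d + l
  | gM, gL, gM => l
  | gY, gY, gM => d + 2 * l
  | gL, gN, gN => d + l
  | gN, gL, gN => l
  | gN, gM, gM => 2
  | gM, gN, gM => -2
  | gN, gY, gY => 1
  | gY, gN, gY => -1
  | _, _, _ => 0
  end.

(* The middle term E = C[d] vbar (+) C[d] v : an element p(d) vbar + q(d) v
   is the pair (p, q). *)
Definition E := ({poly C} * {poly C})%type.

Definition addE (u w : E) : E := (u.1 + w.1, u.2 + w.2).
Definition oppE (u : E) : E := (- u.1, - u.2).
Definition pscale (r : {poly C}) (u : E) : E := (r * u.1, r * u.2).
Definition cscale (c : C) (u : E) : E := pscale c%:P u.

(* A lambda-action, with lambda specialised to a number: gen -> C -> End E. *)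
Definition action := gen -> C -> E -> E.

(* Conformal module axiom [a_lambda, b_mu] = [a_lambda b]_{lambda+mu},
   where (P(d,lambda) x)_{lambda+mu} = P(-lambda-mu, lambda) x_{lambda+mu}
   (from (d a)_lambda = - lambda a_lambda). *)
Definition conformal (act : action) : Prop :=
  forall (a b : gen) (l m : C) (u : E),
    addE (act a l (act b m u)) (oppE (act b m (act a l u))) =
    addE (addE (cscale (lbr a b gL (- (l + m)) l) (act gL (l + m) u))
               (cscale (lbr a b gM (- (l + m)) l) (act gM (l + m) u)))
         (addE (cscale (lbr a b gY (- (l + m)) l) (act gY (l + m) u))
               (cscale (lbr a b gN (- (l + m)) l) (act gN (l + m) u))).

(* Bivariate polynomials f(d, lambda) = sum_i f_i(d) lambda^i, represented
   as {poly {poly C}} (outer variable lambda, inner variable d). *)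
Record cocyc := Cocyc { cf : {poly {poly C}}; cg : {poly {poly C}};
                        ch : {poly {poly C}}; ck : {poly {poly C}} }.

Definition cocyc0 := Cocyc 0 0 0 0.

Definition cocyc_subZ (c : cocyc) (a : C) (c0 : cocyc) : cocyc :=
  Cocyc (cf c - a%:P%:P * cf c0) (cg c - a%:P%:P * cg c0)
        (ch c - a%:P%:P * ch c0) (ck c - a%:P%:P * ck c0).

(* The lambda-action on E determined by (f, g, h, k):
   the submodule C[d] vbar is V(al, bb, Db), and
   L_l v = (d + al + D l) v + f(d,l) vbar, M_l v = g(d,l) vbar,
   N_l v = b v + k(d,l) vbar,  Y_l v = h(d,l) vbar,
   extended by  x_l (p(d) w) = p(d + l) x_l w. *)
Definition ext_act (al b D bb Db : C) (c : cocyc) : action :=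
  fun x l u =>
    let s (p : {poly C}) := p \Po ('X + l%:P) in
    let xvbar : E := match x with
      | gL => ('X + (al + Db * l)%:P, 0)
      | gN => (bb%:P, 0)
      | _ => (0, 0) end in
    let xv : E := match x with
      | gL => ((cf c).[l%:P], 'X + (al + D * l)%:P)
      | gM => ((cg c).[l%:P], 0)
      | gY => ((ch c).[l%:P], 0)
      | gN => ((ck c).[l%:P], b%:P) end in
    addE (pscale (s u.1) xvbar) (pscale (s u.2) xv).

Definition is_ext (al b D bb Db : C) (c : cocyc) : Prop :=
  conformal (ext_act al b D bb Db c).

Definition module_map (A B : action) (phi : E -> E) : Prop :=
  (forall u w, phi (addE u w) = addE (phi u) (phi w)) /\
  (forall (r : {poly C}) u, phi (pscale r u) = pscale r (phi u)) /\
  (forall x l u, phi (A x l u) = B x l (phi u)).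

(* Equivalence of extensions: a module map of middle terms which is the
   identity on the submodule C[d] vbar and induces the identity on the
   quotient C[d] v. *)
Definition ext_equiv (al b D bb Db : C) (c c' : cocyc) : Prop :=
  exists phi : E -> E,
    module_map (ext_act al b D bb Db c) (ext_act al b D bb Db c') phi /\
    (forall p : {poly C}, phi (p, 0) = (p, 0)) /\
    (forall u, (phi u).2 = u.2).

Definition ext_trivial (al b D bb Db : C) (c : cocyc) : Prop :=
  ext_equiv al b D bb Db c cocyc0.

(* dim Ext = 1 : the quotient of the space of cocycles by the coboundaries
   (trivial cocycles) is one-dimensional. *)
Definition Ext_dim1 (al b D bb Db : C) : Prop :=
  exists c0, is_ext al b D bb Db c0 /\ ~ ext_trivial al b D bb Db c0 /\
    forall c, is_ext al b D bb Db c ->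
      exists a : C, ext_trivial al b D bb Db (cocyc_subZ c a c0).

End SV.

From HB Require Import structures.
From mathcomp Require Import all_boot all_algebra.
From mathcomp Require Import reals complex.
From mathcomp Require Import ring.
Set Implicit Arguments. Unset Strict Implicit. Unset Printing Implicit Defensive.
Import GRing.Theory Num.Theory.
Local Open Scope ring_scope.

(* The middle term E = C[d] vbar (+) C[d] v is triangular, so the conformal
   identities split into those of the two rank-one modules, which always hold,
   and a cocycle condition on (f, g, h, k).  Its N-N, L-N and Y-Y components
   force k(d, l) = bb r(d + l) - b r(d) with r = k(d, 0), make f the matching
   L-coboundary of r, and kill g; so replacing v by v + r(d) vbar removes f, g
   and k, while h is invariant under equivalence.  The N-Y and L-Y components
   give h(d, l) = bb H(d + l) - b H(d) with
     (d + al + A l) H(d + l) = (d + al + B l) H(d),  A = Db - bb/2, B = D - b/2,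
   whose only polynomial solutions are constants, nonzero only if A = B (case
   (i)), and multiples of d + al when A = 0 and B = 1 (case (ii)). *)

Lemma eq_of_subr_mul (S : comPzRingType) (k x y z : S) : x - y = k * z -> z = 0 -> x = y.
Proof. by move=> xy z0; apply/eqP; rewrite -subr_eq0 xy z0 mulr0. Qed.

Section Polynomials.
Variable F : numFieldType.
Implicit Types (p q : {poly F}) (x : F).

Lemma poly_eq0_except p (x0 : F) : (forall x, x != x0 -> p.[x] = 0) -> p = 0.
Proof.
move=> p0; apply: (@roots_geq_poly_eq0 _ p [seq x0 + i.+1%:R | i <- iota 0 (size p)]).
- apply/allP => _ /mapP [i _ ->]; apply/eqP/p0.
  by rewrite -{2}[x0]addr0 (inj_eq (addrI x0)) pnatr_eq0.
- rewrite map_inj_uniq ?iota_uniq // => i j /addrI /eqP.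
  by rewrite eqr_nat eqSS => /eqP.
- by rewrite size_map size_iota.
Qed.

Lemma polyC_except p (x0 a : F) : (forall x, x != x0 -> p.[x] = a) -> p = a%:P.
Proof.
move=> pa; apply/eqP; rewrite -subr_eq0; apply/eqP/(@poly_eq0_except _ x0) => x x_x0.
by rewrite !hornerE pa // subrr.
Qed.

Lemma poly_horner_inj p q : (forall x, p.[x] = q.[x]) -> p = q.
Proof.
move=> pq; apply/eqP; rewrite -subr_eq0; apply/eqP/(@poly_eq0_except _ 0) => x _.
by rewrite !hornerE pq subrr.
Qed.

Lemma poly_shift_eq_cases p (s A B : F) :
  (forall l x, (x + s + A * l) * p.[x + l] = (x + s + B * l) * p.[x]) ->
  (exists a, p = a%:P /\ (a != 0 -> A = B)) \/
  [/\ A = 0, B = 1 & exists a, p = a%:P * ('X + s%:P)].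
Proof.
move=> shift.
have at_s l : A * l * p.[- s + l] = B * l * p.[- s].
  by have := shift l (- s); rewrite addNr !add0r.
have [A0|nzA] := eqVneq A 0; last first.
  have pC : p = (B / A * p.[- s])%:P.
    apply: (@polyC_except _ (- s)) => x x_s.
    have nz : x + s != 0 by rewrite -(subr_eq0 x (- s)) opprK in x_s.
    have := at_s (x + s); rewrite [- s + _]addrC addrK => e.
    apply: (mulfI (mulf_neq0 nzA nz)); rewrite mulrA e; field.
    by rewrite nzA.
  left; exists (B / A * p.[- s]); split => // nz.
  by have := at_s 1; rewrite pC !hornerC !mulr1 => /(mulIf nz).
pose a := p.[1 - s].
have pE : p = a%:P * ((1 - B)%:P + B%:P * ('X + s%:P)).
  apply: poly_horner_inj => x; have := shift (x + s - 1) (1 - s).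
  have -> : 1 - s + (x + s - 1) = x by ring.
  rewrite A0 mul0r addr0 subrK mul1r => ->.
  by rewrite !hornerE /a; ring.
have B01 : a != 0 -> B = 0 \/ B = 1.
  move=> nz; have := at_s 1; rewrite A0 !mul0r mulr1 pE !hornerE.
  rewrite addNr mulr0 addr0 => /esym /eqP; rewrite !mulf_eq0 (negbTE nz) /= subr_eq0.
  by rewrite orbF => /orP [/eqP | /eqP/esym]; [left | right].
have [a0|nz] := eqVneq a 0.
  by left; exists 0; rewrite eqxx; split => //; rewrite pE a0 !mul0r.
case: (B01 nz) => [B0|B1].
  left; exists a; split => [|_]; last by rewrite A0 B0.
  by rewrite pE B0 subr0 mul0r addr0 mulr1.
by right; split => //; exists a; rewrite pE B1 subrr add0r mul1r.
Qed.

End Polynomials.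

Section TriangularActions.
Variable R : realType.
Local Notation C := R[i].
Local Notation coef := (gen -> C -> C -> C).

Definition bracket_coef (F : coef) (a e : gen) (l m d : C) : C :=
  lbr a e gL (- (l + m)) l * F gL (l + m) d + lbr a e gM (- (l + m)) l * F gM (l + m) d +
  (lbr a e gY (- (l + m)) l * F gY (l + m) d + lbr a e gN (- (l + m)) l * F gN (l + m) d).

Definition module_defect (F : coef) (a e : gen) (l m d : C) : C :=
  F e m (d + l) * F a l d - F a l (d + m) * F e m d - bracket_coef F a e l m d.

Definition cocycle_defect (F1 F2 F3 : coef) (a e : gen) (l m d : C) : C :=
  F2 e m (d + l) * F1 a l d + F3 e m (d + l) * F2 a l d
  - (F2 a l (d + m) * F1 e m d + F3 a l (d + m) * F2 e m d) - bracket_coef F2 a e l m d.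

Lemma E_horner_inj (u w : E R) :
  (forall d, u.1.[d] = w.1.[d]) -> (forall d, u.2.[d] = w.2.[d]) -> u = w.
Proof. by case: u w => [u1 u2] [w1 w2] /= /poly_horner_inj-> /poly_horner_inj->. Qed.

Definition commutator_act (A : action R) (a e : gen) (l m : C) (u : E R) : E R :=
  addE (A a l (A e m u)) (oppE (A e m (A a l u))).

Definition bracket_act (A : action R) (a e : gen) (l m : C) (u : E R) : E R :=
  addE (addE (cscale (lbr a e gL (- (l + m)) l) (A gL (l + m) u))
             (cscale (lbr a e gM (- (l + m)) l) (A gM (l + m) u)))
       (addE (cscale (lbr a e gY (- (l + m)) l) (A gY (l + m) u))
             (cscale (lbr a e gN (- (l + m)) l) (A gN (l + m) u))).

(* F1 is the action on vbar, F2 the vbar-component and F3 the v-component of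
   the action on v, all evaluated at lambda = l and d. *)
Variables (A : action R) (F1 F2 F3 : coef).
Hypothesis A_fst : forall x l (u : E R) d,
  (A x l u).1.[d] = u.1.[d + l] * F1 x l d + u.2.[d + l] * F2 x l d.
Hypothesis A_snd : forall x l (u : E R) d, (A x l u).2.[d] = u.2.[d + l] * F3 x l d.

Lemma commutator_act_fst a e l m u d :
  (commutator_act A a e l m u).1.[d] - (bracket_act A a e l m u).1.[d] =
  u.1.[d + (l + m)] * module_defect F1 a e l m d +
  u.2.[d + (l + m)] * cocycle_defect F1 F2 F3 a e l m d.
Proof.
rewrite !(hornerD, hornerN, hornerCM, A_fst, A_snd) -!addrA (addrC m l).
by rewrite /module_defect /cocycle_defect /bracket_coef; ring.
Qed.

Lemma commutator_act_snd a e l m u d :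
  (commutator_act A a e l m u).2.[d] - (bracket_act A a e l m u).2.[d] =
  u.2.[d + (l + m)] * module_defect F3 a e l m d.
Proof.
rewrite !(hornerD, hornerN, hornerCM, A_snd) -!addrA (addrC m l).
by rewrite /module_defect /bracket_coef; ring.
Qed.

Lemma conformal_triangularP :
  conformal A <-> forall a e l m d,
    [/\ module_defect F1 a e l m d = 0, cocycle_defect F1 F2 F3 a e l m d = 0
      & module_defect F3 a e l m d = 0].
Proof.
split=> [conf a e l m d | defect0 a e l m u].
  have conf_at (u : E R) : commutator_act A a e l m u = bracket_act A a e l m u :=
    conf a e l m u.
  have defect_fst (u : E R) : u.1.[d + (l + m)] * module_defect F1 a e l m d +
      u.2.[d + (l + m)] * cocycle_defect F1 F2 F3 a e l m d = 0.
    by apply/eqP; rewrite -commutator_act_fst subr_eq0 conf_at.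
  have defect_snd (u : E R) : u.2.[d + (l + m)] * module_defect F3 a e l m d = 0.
    by apply/eqP; rewrite -commutator_act_snd subr_eq0 conf_at.
  move: (defect_fst (1%:P, 0)) (defect_fst (0, 1%:P)) (defect_snd (0, 1%:P)).
  by cbn [fst snd]; rewrite !hornerC !mul1r !mul0r add0r addr0.
apply: E_horner_inj => d; have [d1 d2 d3] := defect0 a e l m d;
  apply/eqP; rewrite -subr_eq0; apply/eqP.
- by rewrite commutator_act_fst d1 d2 !mulr0 addr0.
- by rewrite commutator_act_snd d3 mulr0.
Qed.

End TriangularActions.

Section Extensions.
Variables (R : realType) (al b D bb Db : R[i]).
Local Notation C := R[i].
Local Notation coef := (gen -> C -> C -> C).
Local Notation ext_act := (ext_act al b D bb Db).
Local Notation is_ext := (is_ext al b D bb Db).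
Local Notation ext_equiv := (ext_equiv al b D bb Db).
Local Notation ext_trivial := (ext_trivial al b D bb Db).
Local Notation Ext_dim1 := (Ext_dim1 al b D bb Db).

Definition rank_one_coef (be De : C) : coef := fun x l d =>
  match x with gL => d + (al + De * l) | gN => be | _ => 0 end.

Definition cocycle_coef (c : cocyc R) : coef := fun x =>
  match x with gL => fun l d => (cf c).[l, d] | gM => fun l d => (cg c).[l, d]
             | gY => fun l d => (ch c).[l, d] | gN => fun l d => (ck c).[l, d] end.

Definition ext_defect (c : cocyc R) :=
  cocycle_defect (rank_one_coef bb Db) (cocycle_coef c) (rank_one_coef b D).

Lemma ext_act_fst c x l (u : E R) d :
  (ext_act c x l u).1.[d] =
  u.1.[d + l] * rank_one_coef bb Db x l d + u.2.[d + l] * cocycle_coef c x l d.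
Proof. by case: x; rewrite /ext_act /= !(hornerE, horner_comp). Qed.

Lemma ext_act_snd c x l (u : E R) d :
  (ext_act c x l u).2.[d] = u.2.[d + l] * rank_one_coef b D x l d.
Proof. by case: x; rewrite /ext_act /= !(hornerE, horner_comp). Qed.

Lemma rank_one_module be De a e l m d :
  module_defect (rank_one_coef be De) a e l m d = 0.
Proof. by case: a; case: e; rewrite /module_defect /bracket_coef /=; field. Qed.

Lemma is_extP c : is_ext c <-> forall a e l m d, ext_defect c a e l m d = 0.
Proof.
rewrite /is_ext (conformal_triangularP (ext_act_fst c) (ext_act_snd c)).
split=> [defect0 a e l m d | ext0 a e l m d]; first by case: (defect0 a e l m d).
by split; [exact: rank_one_module | exact: ext0 | exact: rank_one_module].
Qed.

Lemma cocycle_coef_h h x l d :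
  cocycle_coef (Cocyc 0 0 h 0) x l d = if x is gY then h.[l, d] else 0.
Proof. by case: x; rewrite /cocycle_coef /= ?horner0. Qed.

Definition hII (a1 : C) : {poly {poly C}} :=
  a1%:P%:P * (('X + al%:P)%:P + bb%:P%:P * 'X).

Lemma horner2C a0 l d : (a0%:P%:P : {poly {poly C}}).[l, d] = a0.
Proof. by rewrite !hornerC. Qed.

Lemma horner2_hII a1 l d : (hII a1).[l, d] = a1 * (d + al + bb * l).
Proof. by rewrite !(hornerM, hornerD, hornerC, hornerX). Qed.

Hypothesis bbE : bb - b = 1.

Lemma bE : b = bb - 1.
Proof. by rewrite -bbE; ring. Qed.

Lemma is_ext_caseI a0 : D - Db = - (1 / 2) -> is_ext (Cocyc 0 0 a0%:P%:P 0).
Proof.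
move=> DE; apply/is_extP => x1 x2 l m d.
rewrite /ext_defect /cocycle_defect /bracket_coef !cocycle_coef_h !horner2C.
have -> : D = Db - 1 / 2 by rewrite -DE; ring.
by rewrite bE; case: x1; case: x2; rewrite /=; field.
Qed.

Lemma is_ext_caseII a1 : D = (bb + 1) / 2 /\ Db = bb / 2 -> is_ext (Cocyc 0 0 (hII a1) 0).
Proof.
move=> [DE DbE]; apply/is_extP => x1 x2 l m d.
rewrite /ext_defect /cocycle_defect /bracket_coef !cocycle_coef_h !horner2_hII.
by rewrite bE DE DbE; case: x1; case: x2; rewrite /=; field.
Qed.

Lemma cocycle_k c : is_ext c -> forall l d,
  (ck c).[l, d] = bb * (ck c).[0, d + l] - b * (ck c).[0, d].
Proof.
move=> /is_extP ext0 l d; apply: (eq_of_subr_mul (k := -1) _ (ext0 gN gN l 0 d)).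
by rewrite /ext_defect /cocycle_defect /bracket_coef /= !addr0 bE; ring.
Qed.

Lemma cocycle_f c : is_ext c -> forall l d,
  (cf c).[l, d] = (d + (al + Db * l)) * (ck c).[0, d + l]
                     - (d + (al + D * l)) * (ck c).[0, d].
Proof.
move=> ext l d; have /is_extP ext0 := ext.
apply: (eq_of_subr_mul (k := -1) _ (ext0 gL gN l 0 d)).
rewrite /ext_defect /cocycle_defect /bracket_coef /= !addr0 (cocycle_k ext l d).
by rewrite bE; ring.
Qed.

Lemma cocycle_g c : is_ext c -> forall l d, (cg c).[l, d] = 0.
Proof.
move=> /is_extP ext0 l d.
(* The Y-Y component reads (l - m) g(d, l + m) = 0. *)
have := ext0 gY gY ((l + 1) / 2) ((l - 1) / 2) d.
rewrite /ext_defect /cocycle_defect /bracket_coef /=.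
have -> : (l + 1) / 2 + (l - 1) / 2 = l by field.
by move=> e; apply: (eq_of_subr_mul (k := -1) _ e); field.
Qed.

Lemma cocycle_h c : is_ext c -> forall l d,
  (ch c).[l, d] = bb * (ch c).[0, d + l] - b * (ch c).[0, d].
Proof.
move=> /is_extP ext0 l d; apply: (eq_of_subr_mul (k := -1) _ (ext0 gN gY l 0 d)).
by rewrite /ext_defect /cocycle_defect /bracket_coef /= !addr0; ring.
Qed.

Lemma cocycle_h_shift c : is_ext c -> forall l d,
  (d + al + (Db - bb / 2) * l) * (ch c).[0, d + l] =
  (d + al + (D - b / 2) * l) * (ch c).[0, d].
Proof.
move=> ext l d; have /is_extP ext0 := ext.
apply: (eq_of_subr_mul (k := 1) _ (ext0 gL gY l 0 d)).
by rewrite /ext_defect /cocycle_defect /bracket_coef /= !addr0 (cocycle_h ext l d); field.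
Qed.

Lemma cocycle_h_cases c : is_ext c ->
  (exists K, (forall l d, (ch c).[l, d] = K) /\ (K != 0 -> D - Db = - (1 / 2))) \/
  ((D = (bb + 1) / 2 /\ Db = bb / 2) /\
   exists K, forall l d, (ch c).[l, d] = K * (d + al + bb * l)).
Proof.
move=> ext; have := @poly_shift_eq_cases _ (ch c).[0%:P] al _ _ (cocycle_h_shift ext).
case=> [[K [HK AB]] | [A0 B1 [K HK]]].
  left; exists K; split=> [l d | /AB].
    by rewrite (cocycle_h ext) HK !hornerC bE; ring.
  move/eqP; rewrite -subr_eq0 => /eqP AB0.
  by apply: (eq_of_subr_mul (k := -1) _ AB0); rewrite bE; field.
right; split.
  by rewrite -(subrK (b / 2) D) B1 -(subrK (bb / 2) Db) A0 add0r bE; split; field.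
by exists K => l d; rewrite (cocycle_h ext) HK !(hornerM, hornerD, hornerC, hornerX) bE; ring.
Qed.

Lemma ext_equiv_coboundary c c' (r : {poly C}) :
  (forall l d, (cf c).[l, d] = (cf c').[l, d] +
     ((d + (al + Db * l)) * r.[d + l] - (d + (al + D * l)) * r.[d])) ->
  (forall l d, (cg c).[l, d] = (cg c').[l, d]) ->
  (forall l d, (ch c).[l, d] = (ch c').[l, d]) ->
  (forall l d, (ck c).[l, d] = (ck c').[l, d] + (bb * r.[d + l] - b * r.[d])) ->
  ext_equiv c c'.
Proof.
move=> fE gE hE kE; exists (fun u : E R => (u.1 + u.2 * r, u.2)).
split; last by split=> // p; rewrite mul0r addr0.
split; first by move=> [u1 u2] [w1 w2]; rewrite /addE; cbn [fst snd]; congr (_, _); ring.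
split; first by move=> p [u1 u2]; rewrite /pscale; cbn [fst snd]; congr (_, _); ring.
move=> x l u; apply: E_horner_inj => d; cbn [fst snd]; last by rewrite !ext_act_snd.
rewrite hornerD hornerM !ext_act_fst ext_act_snd; cbn [fst snd]; rewrite hornerD hornerM.
by case: x; rewrite /= ?fE ?gE ?hE ?kE; ring.
Qed.

Lemma ext_equiv_h c c' :
  ext_equiv c c' -> forall l d, (ch c).[l, d] = (ch c').[l, d].
Proof.
move=> [phi [[_ [_ phiA]] [phi_sub phi_snd]]] l d.
have actY : ext_act c gY l (0, 1) = ((ch c).[l%:P], 0).
  apply: E_horner_inj => z; rewrite ?ext_act_fst ?ext_act_snd /= ?horner0 ?hornerC.
    by rewrite mulr0 mul1r add0r.
  by rewrite mulr0.
have := congr1 (fun w : E R => w.1.[d]) (phiA gY l (0, 1)).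
by rewrite actY phi_sub ext_act_fst phi_snd /= hornerC mulr0 add0r mul1r.
Qed.

Lemma ext_equiv_h_only c h :
  is_ext c -> (forall l d, (ch c).[l, d] = h.[l, d]) ->
  ext_equiv c (Cocyc 0 0 h 0).
Proof.
move=> ext hE; apply: (ext_equiv_coboundary (r := (ck c).[0%:P])) => l d;
  cbn [cf cg ch ck]; rewrite ?horner0.
- by rewrite add0r (cocycle_f ext).
- exact: cocycle_g.
- exact: hE.
- by rewrite add0r (cocycle_k ext).
Qed.

Lemma ext_trivialP c : is_ext c -> ext_trivial c <-> forall l d, (ch c).[l, d] = 0.
Proof.
move=> ext; split=> [/ext_equiv_h hE l d | h0]; first by rewrite hE /= !horner0.
by apply: ext_equiv_h_only => // l d; rewrite h0 !horner0.
Qed.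

Lemma ext_trivial_subZ c a h0 :
  is_ext c -> (forall l d, (ch c).[l, d] = a * h0.[l, d]) ->
  ext_trivial (cocyc_subZ c a (Cocyc 0 0 h0 0)).
Proof.
move=> ext hE; apply: (ext_equiv_coboundary (r := (ck c).[0%:P])) => l d;
  cbn [cf cg ch ck cocyc_subZ cocyc0]; rewrite ?mulr0 ?subr0 ?horner0.
- by rewrite add0r (cocycle_f ext).
- exact: cocycle_g.
- by rewrite !(hornerD, hornerN, hornerM, hornerC) hE subrr.
- by rewrite add0r (cocycle_k ext).
Qed.

Lemma ext_classification_line (e : C -> C -> C) (h0 : C -> {poly {poly C}}) l0 d0 :
  (forall a l d, (h0 a).[l, d] = a * e l d) -> e l0 d0 != 0 ->
  (forall a, is_ext (Cocyc 0 0 (h0 a) 0)) ->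
  (forall c, is_ext c -> exists a, forall l d, (ch c).[l, d] = a * e l d) ->
  (forall a, a != 0 ->
     is_ext (Cocyc 0 0 (h0 a) 0) /\ ~ ext_trivial (Cocyc 0 0 (h0 a) 0)) /\
  (forall c, is_ext c -> ~ ext_trivial c ->
     exists a, a != 0 /\ ext_equiv c (Cocyc 0 0 (h0 a) 0)) /\
  Ext_dim1.
Proof.
move=> h0E e0 h0_ext h_line.
have nontriv a : a != 0 -> ~ ext_trivial (Cocyc 0 0 (h0 a) 0).
  move=> a0 /(ext_trivialP (h0_ext a)) /(_ l0 d0) /eqP.
  by rewrite h0E mulf_eq0 (negbTE a0) (negbTE e0).
split; first by move=> a a0; split; [exact: h0_ext | exact: nontriv].
split=> [c ext ntriv | ].
  have [a hE] := h_line c ext; exists a; split.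
    by apply/eqP => a0; apply/ntriv/(ext_trivialP ext) => l d; rewrite hE a0 mul0r.
  by apply: ext_equiv_h_only => // l d; rewrite hE h0E.
exists (Cocyc 0 0 (h0 1) 0); split; first exact: h0_ext.
split=> [|c ext]; first exact/nontriv/oner_neq0.
have [a hE] := h_line c ext; exists a.
by apply: ext_trivial_subZ => // l d; rewrite hE h0E mul1r.
Qed.

Lemma caseI_caseII_disjoint :
  D - Db = - (1 / 2) -> ~ (D = (bb + 1) / 2 /\ Db = bb / 2).
Proof.
move=> DE [DE' DbE]; have := oner_neq0 C.
rewrite (_ : (1 : C) = D - Db + 1 / 2); last by rewrite DE' DbE; field.
by rewrite DE addNr eqxx.
Qed.

Lemma caseI_classification : D - Db = - (1 / 2) ->
  (forall a0 : C, a0 != 0 ->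
     is_ext (Cocyc 0 0 a0%:P%:P 0) /\ ~ ext_trivial (Cocyc 0 0 a0%:P%:P 0)) /\
  (forall c, is_ext c -> ~ ext_trivial c ->
     exists a0 : C, a0 != 0 /\ ext_equiv c (Cocyc 0 0 a0%:P%:P 0)) /\
  Ext_dim1.
Proof.
move=> DE; apply: (@ext_classification_line (fun _ _ => 1) (fun a => a%:P%:P) 0 0).
- by move=> a l d; rewrite horner2C mulr1.
- exact: oner_neq0.
- by move=> a; apply: is_ext_caseI.
move=> c ext; case: (cocycle_h_cases ext) => [[K [hK _]] | [II _]].
  by exists K => l d; rewrite hK mulr1.
by case: (caseI_caseII_disjoint DE II).
Qed.

Lemma caseII_classification : D = (bb + 1) / 2 /\ Db = bb / 2 ->
  (forall a1 : C, a1 != 0 ->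
     is_ext (Cocyc 0 0 (hII a1) 0) /\ ~ ext_trivial (Cocyc 0 0 (hII a1) 0)) /\
  (forall c, is_ext c -> ~ ext_trivial c ->
     exists a1 : C, a1 != 0 /\ ext_equiv c (Cocyc 0 0 (hII a1) 0)) /\
  Ext_dim1.
Proof.
move=> II.
apply: (@ext_classification_line (fun l d => d + al + bb * l) hII 0 (1 - al)).
- exact: horner2_hII.
- by rewrite mulr0 addr0 subrK oner_neq0.
- by move=> a; apply: is_ext_caseII.
move=> c ext; case: (cocycle_h_cases ext) => [[K [hK KI]] | [_ [K hK]]]; last by exists K.
have [K0 | /KI DE] := eqVneq K 0; last by case: (caseI_caseII_disjoint DE II).
by exists 0 => l d; rewrite hK K0 mul0r.
Qed.

Lemma ext_nontrivial_iff :
  (exists c, is_ext c /\ ~ ext_trivial c) <->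
  D - Db = - (1 / 2) \/ (D = (bb + 1) / 2 /\ Db = bb / 2).
Proof.
split=> [[c [ext ntriv]] | [/caseI_classification | /caseII_classification]].
- case: (cocycle_h_cases ext) => [[K [hK KI]] | [II _]]; last by right.
  left; apply: KI; apply/eqP => K0.
  by apply/ntriv/(ext_trivialP ext) => l d; rewrite hK K0.
- by case=> /(_ 1 (oner_neq0 _)) ext_1 _; exists (Cocyc 0 0 1%:P%:P 0).
- by case=> /(_ 1 (oner_neq0 _)) ext_1 _; exists (Cocyc 0 0 (hII 1) 0).
Qed.

End Extensions.

Theorem theorem5p8 (R : realType) (al b bb D Db : R[i]) :
  (D, b) != (0, 0) -> (Db, bb) != (0, 0) -> bb - b = 1 ->
  let caseI := D - Db = - (1 / 2) in
  let caseII := D = (bb + 1) / 2 /\ Db = bb / 2 in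
  ((exists c, is_ext al b D bb Db c /\ ~ ext_trivial al b D bb Db c)
     <-> caseI \/ caseII) /\
  (caseI ->
     (forall a0 : R[i], a0 != 0 ->
        is_ext al b D bb Db (Cocyc 0 0 a0%:P%:P 0) /\
        ~ ext_trivial al b D bb Db (Cocyc 0 0 a0%:P%:P 0)) /\
     (forall c, is_ext al b D bb Db c -> ~ ext_trivial al b D bb Db c ->
        exists a0 : R[i], a0 != 0 /\
          ext_equiv al b D bb Db c (Cocyc 0 0 a0%:P%:P 0)) /\
     Ext_dim1 al b D bb Db) /\
  (caseII ->
     let hII (a1 : R[i]) : {poly {poly R[i]}} :=
       a1%:P%:P * (('X + al%:P)%:P + bb%:P%:P * 'X) in
     (forall a1 : R[i], a1 != 0 ->
        is_ext al b D bb Db (Cocyc 0 0 (hII a1) 0) /\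
        ~ ext_trivial al b D bb Db (Cocyc 0 0 (hII a1) 0)) /\
     (forall c, is_ext al b D bb Db c -> ~ ext_trivial al b D bb Db c ->
        exists a1 : R[i], a1 != 0 /\
          ext_equiv al b D bb Db c (Cocyc 0 0 (hII a1) 0)) /\
     Ext_dim1 al b D bb Db).
Proof.
move=> _ _ bbE; split; first exact: ext_nontrivial_iff.
split; first exact: caseI_classification.
by move=> II; apply: caseII_classification.
Qed.
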